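(* Let $X$ be a set, $\mathcal{F}\subseteq\mathcal{P}(X)$ a $\sigma$-field, and $\mu:\mathcal{F}\to[0,1]$ a countably subadditive set function with $\mu(\emptyset)=0$. Then the pseudometric space $(\mathcal{F}, d_\mu)$, where $d_\mu(A,B):=\mu(A\triangle B)$, is complete.
   Context: $\mu$ is countably subadditive if for any $A,A_1,A_2,\ldots\in\mathcal{F}$, $I_A\le\sum_{k=1}^\infty I_{A_k}$ implies $\mu(A)\le\sum_{k=1}^\infty\mu(A_k)$, where $I_B$ denotes the indicator function of $B$. *)

From HB Require Import structures.
From mathcomp Require Import all_boot all_order all_algebra.
From mathcomp Require Import all_classical all_reals all_analysis.
Set Implicit Arguments. Unset Strict Implicit. Unset Printing Implicit Defensive.
Import Order.TTheory GRing.Theory Num.Theory.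
Local Open Scope classical_set_scope.
Local Open Scope ring_scope.

Definition countably_subadditive (d : measure_display) (T : measurableType d)
    (R : realType) (mu : set T -> R) : Prop :=
  forall (A : set T) (B : nat -> set T),
    measurable A -> (forall k, measurable (B k)) ->
    (forall x : T, ((\1_A x : R)%:E <= \sum_(0 <= k <oo) (\1_(B k) x : R)%:E)%E) ->
    ((mu A)%:E <= \sum_(0 <= k <oo) (mu (B k))%:E)%E.

Definition dmu (d : measure_display) (T : measurableType d) (R : realType)
    (mu : set T -> R) (A B : set T) : R := mu (A `+` B).

From HB Require Import structures.
From mathcomp Require Import all_boot all_order all_algebra.
From mathcomp Require Import all_classical all_reals all_analysis.
From mathcomp Require Import ring lra.
Import Order.TTheory GRing.Theory Num.Theory.
Local Open Scope classical_set_scope.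
Local Open Scope ring_scope.

(* Pass to a subsequence C k := A (M k) with d(C k, C k.+1) < 2^-(k+1) and put
   B := limsup C.  A point of C j `+` B must leave or enter the sequence after
   index j, so C j `+` B is covered by the sets C k `+` C k.+1, k >= j, and
   countable subadditivity gives d(C j, B) <= 2^-j.  The triangle inequality
   (finite subadditivity, a special case) transfers this to the whole
   Cauchy sequence. *)

Lemma indic_le_eseries_indic {T : Type} {R : realType} {A : set T} {B : nat -> set T} :
  A `<=` \bigcup_k B k ->
  forall x, ((\1_A x : R)%:E <= \sum_(0 <= k <oo) (\1_(B k) x : R)%:E)%E.
Proof.
move=> AB x; have B0 n : (0 <= (\1_(B n) x : R)%:E)%E by rewrite lee_fin.
have [Ax|nAx] := pselect (A x); last first.
  by rewrite indicE memNset//; apply: nneseries_ge0.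
have [k _ Bkx] := AB x Ax.
rewrite indicE mem_set//; apply: le_trans (nneseries_lim_ge k.+1 _) => //.
rewrite big_nat_recr//= indicE mem_set// -[X in (X <= _)%E]add0e.
by apply: leeD => //; apply: sume_ge0.
Qed.

Lemma measurableY {d} {T : measurableType d} {A B : set T} :
  measurable A -> measurable B -> measurable (A `+` B).
Proof. by move=> mA mB; apply: measurableU; apply: measurableD. Qed.

Lemma measurable_lim_sup_set {d} {T : measurableType d} {C : nat -> set T} :
  (forall k, measurable (C k)) -> measurable (lim_sup_set C).
Proof. by move=> mC; apply: bigcap_measurable => // k _; apply: bigcup_measurable. Qed.

Lemma setY_lim_sup_set_subset {T : Type} (C : nat -> set T) j :
  C j `+` lim_sup_set C `<=` \bigcup_k (C (j + k)%N `+` C (j + k).+1).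
Proof.
move=> x Yx; apply: contrapT => noswitch.
have {}noswitch m : ~ (C (j + m)%N `+` C (j + m).+1) x.
  by move=> ?; apply: noswitch; exists m.
have stable m : C (j + m)%N x <-> C j x.
  elim: m => [|m IH]; first by rewrite addn0.
  rewrite -IH addnS; have := noswitch m; rewrite /setY /setD /=.
  by case: (pselect (C (j + m)%N x)); case: (pselect (C (j + m).+1 x)); tauto.
case: Yx => [[Cjx]|[Bx]]; last first.
  have [k /= jk Ckx] := Bx j I; rewrite -(subnKC jk) in Ckx.
  by apply; apply/(stable (k - j)%N).
apply => n _; exists (n + j)%N; first by rewrite /= leq_addr.
by rewrite addnC; apply/stable.
Qed.

Section subadditive_set_function.
Context {d : measure_display} {T : measurableType d} {R : realType}.
Context {mu : set T -> R}.
Hypothesis mu_ge0 : forall A : set T, measurable A -> 0 <= mu A.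
Hypothesis mu_subadd : countably_subadditive mu.
Hypothesis mu0 : mu set0 = 0.

Lemma mu_le_eseries_bigcup {A : set T} {B : nat -> set T} :
  measurable A -> (forall k, measurable (B k)) -> A `<=` \bigcup_k B k ->
  ((mu A)%:E <= \sum_(0 <= k <oo) (mu (B k))%:E)%E.
Proof. by move=> mA mB AB; apply: mu_subadd => //; apply: indic_le_eseries_indic. Qed.

Lemma mu_le_setU (A Y Z : set T) : measurable A -> measurable Y -> measurable Z ->
  A `<=` Y `|` Z -> mu A <= mu Y + mu Z.
Proof.
move=> mA mY mZ AYZ.
pose B k := if k == 0%N then Y else if k == 1%N then Z else set0.
have mB k : measurable (B k) by rewrite /B; case: ifP => // _; case: ifP.
have /(mu_le_eseries_bigcup mA mB) : A `<=` \bigcup_k B k.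
  by move=> x /AYZ [Yx|Zx]; [exists 0%N | exists 1%N].
rewrite (@nneseries_split _ _ 0 2); last by move=> k _; rewrite lee_fin mu_ge0.
rewrite add0n eseries0; last by case=> [|[|i]] // _ _; rewrite /B /= mu0.
by rewrite adde0 /= !big_nat_recr//= big_nil add0e -EFinD lee_fin.
Qed.

Lemma dmu_ge0 (X Y : set T) : measurable X -> measurable Y -> 0 <= dmu mu X Y.
Proof. by move=> mX mY; apply/mu_ge0/measurableY. Qed.

Lemma dmu_triangle {X Y Z : set T} : measurable X -> measurable Y -> measurable Z ->
  dmu mu X Z <= dmu mu X Y + dmu mu Y Z.
Proof.
move=> mX mY mZ; apply: mu_le_setU; try exact: measurableY.
by move=> x; rewrite /setY /setU /setD /=; case: (pselect (Y x)); tauto.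
Qed.

Lemma dmu_lim_sup_set_le {C : nat -> set T} :
  (forall k, measurable (C k)) ->
  (forall k, dmu mu (C k) (C k.+1) < 1 / (2 ^ k.+1)%:R) ->
  forall j, dmu mu (C j) (lim_sup_set C) <= 1 / 2 ^+ j.
Proof.
move=> mC hC j.
have mCjB := measurableY (mC j) (measurable_lim_sup_set mC).
have mS k : measurable (C (j + k)%N `+` C (j + k).+1) by apply: measurableY.
rewrite -lee_fin.
apply: le_trans (mu_le_eseries_bigcup mCjB mS (setY_lim_sup_set_subset C j)) _.
apply: le_trans (_ : _ <= \sum_(0 <= k <oo) (1 / (2 ^ (k + j.+1))%:R)%:E)%E _.
  apply: lee_nneseries => [k _ _|k _]; first by rewrite lee_fin mu_ge0.
  by rewrite lee_fin ltW// addnS [(k + j)%N]addnC; apply: hC.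
by move: (@cvg_geometric_eseries_half R 1 j) => /cvg_lim ->.
Qed.

End subadditive_set_function.

Lemma cauchy_fast_subseq {R : realType} {dist : nat -> nat -> R} {e : nat -> R} :
  (forall k, 0 < e k) ->
  (forall r : R, 0 < r -> exists N : nat, forall n m : nat,
     (N <= n)%N -> (N <= m)%N -> dist n m < r) ->
  exists M : nat -> nat, (forall k, M k <= M k.+1)%N /\
    forall k n m, (M k <= n)%N -> (M k <= m)%N -> dist n m < e k.
Proof.
move=> e_gt0 cauchy.
have /choice[N hN] := fun k => cauchy _ (e_gt0 k).
exists (fun k => \sum_(i < k.+1) N i)%N; split=> [k|k n m kn km].
  by rewrite (big_ord_recr k.+1) /= leq_addr.
have Nk : (N k <= \sum_(i < k.+1) N i)%N by rewrite big_ord_recr /= leq_addl.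
by apply: hN; apply: leq_trans Nk _.
Qed.

Theorem proposition3p4 (d : measure_display) (T : measurableType d) (R : realType)
  (mu : set T -> R)
  (mu_range : forall A : set T, measurable A -> 0 <= mu A <= 1)
  (mu_subadd : countably_subadditive mu)
  (mu0 : mu set0 = 0) :
  forall A : nat -> set T, (forall n, measurable (A n)) ->
    (forall e : R, 0 < e -> exists N : nat, forall n m : nat,
        (N <= n)%N -> (N <= m)%N -> dmu mu (A n) (A m) < e) ->
    exists2 B : set T, measurable B &
      (fun n => dmu mu (A n) B : R^o) @ \oo --> 0.
Proof.
move=> A mA cauchy.
have mu_ge0 X : measurable X -> 0 <= mu X by move=> /mu_range /andP[].
have eps_gt0 k : 0 < 1 / (2 ^ k.+1)%:R :> R by rewrite divr_gt0// ltr0n expn_gt0.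
have [M [M_mono hM]] := cauchy_fast_subseq eps_gt0 cauchy.
pose C k := A (M k); have mC k : measurable (C k) by apply: mA.
have hC k : dmu mu (C k) (C k.+1) < 1 / (2 ^ k.+1)%:R by apply: hM.
have mB := measurable_lim_sup_set mC.
exists (lim_sup_set C) => //; apply/cvgr0Pnorm_lt => e e_gt0.
pose j := Num.bound (2 / e).
have ej : 2 / 2 ^+ j < e.
  by rewrite ltr_pdivrMr ?exprn_gt0// mulrC -ltr_pdivrMr// upper_nthrootP.
exists (M j) => // n jn /=; rewrite ger0_norm; last exact: dmu_ge0.
have dAC : dmu mu (A n) (C j) < 1 / (2 ^ j.+1)%:R by apply: hM.
have dCB := dmu_lim_sup_set_le mu_ge0 mu_subadd mC hC j.
have tri := dmu_triangle mu_ge0 mu_subadd mu0 (mA n) (mC j) mB.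
have half : 1 / (2 ^ j.+1)%:R = (1 / 2 ^+ j) / 2 :> R.
  by rewrite natrX exprS; field; rewrite expf_neq0.
have twice : 2 / 2 ^+ j = 2 * (1 / 2 ^+ j) :> R by rewrite mulrA mulr1.
rewrite half in dAC; rewrite twice in ej; clear half twice.
move: (1 / 2 ^+ j) ej dAC dCB => q; lra.
Qed.
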